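(* Let $k$ be an algebraically closed field of characteristic $0$, $d\ge3$, $n\ge1$, and let $V_n$ have basis $v_1,\dots,v_n$ with symmetric $d$-linear form $\Theta_d(v_{i_1},\dots,v_{i_d})=1$ if $i_1+\dots+i_d=(d-1)n+1$ and $0$ otherwise. Let $\mathcal{L}(n,d)=\{L\in\mathfrak{gl}(V_n):\sum_{i=1}^d\Theta_d(u_1,\dots,L(u_i),\dots,u_d)=0\ \forall u_j\}$. Then every element of $\mathcal{L}(n,d)$ is upper triangular with respect to the basis $v_1,\dots,v_n$ (i.e. maps $v_i$ into $\mathrm{span}\{v_1,\dots,v_i\}$); hence $\mathcal{L}(n,d)$ is solvable. *)

From HB Require Import structures.
From mathcomp Require Import all_boot all_order all_algebra.
Set Implicit Arguments. Unset Strict Implicit. Unset Printing Implicit Defensive.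
Import GRing.Theory.
Local Open Scope ring_scope.

(* V_n = column vectors 'cV[k]_n, basis vector v_(i+1) = delta at index i : 'I_n. *)
Definition Theta (k : fieldType) (n d : nat) (u : 'I_d -> 'cV[k]_n) : k :=
  \sum_(t : {ffun 'I_d -> 'I_n} | (\sum_(j < d) (t j).+1)%N == ((d - 1) * n + 1)%N)
     \prod_(j < d) u j (t j) ord0.

Definition in_Lnd (k : fieldType) (n d : nat) (L : 'M[k]_n) : Prop :=
  forall u : 'I_d -> 'cV[k]_n,
    \sum_(i < d) Theta (fun j => if j == i then L *m u j else u j) = 0.

(* Upper triangular w.r.t. v_1..v_n: L v_i in span{v_1..v_i}, i.e. the
   v_j-coefficient (L j i) of L v_i vanishes for j > i. *)
Definition upper_triangular (k : fieldType) (n : nat) (L : 'M[k]_n) : Prop :=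
  forall i j : 'I_n, (i < j)%N -> L j i = 0.

Fixpoint derived (k : fieldType) (n : nat) (P : 'M[k]_n -> Prop) (m : nat)
  : 'M[k]_n -> Prop :=
  match m with
  | 0 => P
  | m'.+1 => fun Z => exists s : seq (k * 'M[k]_n * 'M[k]_n),
       (forall p, p \in s -> derived P m' p.1.2 /\ derived P m' p.2) /\
       Z = \sum_(p <- s) p.1.1 *: (p.1.2 *m p.2 - p.2 *m p.1.2)
  end.

Definition lie_solvable (k : fieldType) (n : nat) (P : 'M[k]_n -> Prop) : Prop :=
  exists m, forall Z, derived P m Z -> Z = 0.

From mathcomp Require Import all_boot all_order all_algebra.
From mathcomp Require Import ring zify.
Set Implicit Arguments. Unset Strict Implicit. Unset Printing Implicit Defensive.
Import GRing.Theory.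
Local Open Scope ring_scope.

(* Fix m > 0 and read the m-th subdiagonal of L from its last column: y x is
   the entry in row n - 1 + m - x and column n - 1 - x, with y x = 0 for x < m.
   Testing the invariance of Theta on basis vectors v_(n - q_j), the L-image
   of the vector in slot i is paired by Theta with exactly one basis vector,
   and the condition becomes sum_i y (q_i) = 0 whenever sum_j q_j = n - 1 + m.
   Padding with zeros (d >= 3) gives y a + y b + y c = 0 for a + b + c =
   n - 1 + m. In characteristic 0 this three-term equation forces y to be
   affine on [m, n - 1 - m], two instances of it at the ends of that range
   make y vanish there, and triples with one index below m do the rest.
   Finally, for upper triangular matrices each bracket pushes the support one
   diagonal further up, so the n-th derived term vanishes. *)

Section ThreeTermEquation.
Variables (k : fieldType) (y : nat -> k) (m N : nat).
Hypothesis k_char0 : [pchar k] =i pred0.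
Hypotheses (m_gt0 : (0 < m)%N) (m_le_N : (m <= N)%N).
Hypothesis y_lt_m : forall x, (x < m)%N -> y x = 0.
Hypothesis y_triple : forall a b c, (a <= N)%N -> (b <= N)%N -> (c <= N)%N ->
  (a + b + c = m + N)%N -> y a + y b + y c = 0.

Let natr_mul_eq0 p (x : k) : p.+1%:R * x = 0 -> x = 0.
Proof.
by move/eqP; rewrite mulf_eq0 ((pcharf0P k).1 k_char0) orFb => /eqP.
Qed.

Lemma three_term_pair a b : (a <= N)%N -> (b <= N)%N ->
  (N < a + b)%N -> (a + b <= m + N)%N -> y a + y b = 0.
Proof.
move=> a_le b_le N_lt ab_le; have c_lt : (m + N - (a + b) < m)%N by lia.
by rewrite -[RHS](@y_triple a b (m + N - (a + b))) ?(y_lt_m c_lt) ?addr0 //; lia.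
Qed.

Lemma three_term_tail x : y m = 0 -> (N - m < x)%N -> (x <= N)%N -> y x = 0.
Proof.
move=> ym lt_x x_le.
by rewrite -[RHS](three_term_pair m_le_N x_le) ?ym ?add0r //; lia.
Qed.

Lemma three_term_m_eq0_short : (N < m + m)%N -> y m = 0.
Proof.
move=> N_lt; apply: (@natr_mul_eq0 1); rewrite mulr2n mulrDl mul1r.
by apply: three_term_pair => //; lia.
Qed.

Lemma three_term_step i : (m + i.+1 <= N - m)%N ->
  y (m + i.+1) = y (m + i) + (y m.+1 - y m).
Proof.
move=> i_le; set c := (N - m - i.+1)%N.
have e1 : y (m + i) + y m.+1 + y c = 0 by apply: y_triple; lia.
have e2 : y c + y m + y (m + i.+1) = 0 by apply: y_triple; lia.
apply/eqP; rewrite -subr_eq0.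
have -> : y (m + i.+1) - (y (m + i) + (y m.+1 - y m)) =
          (y c + y m + y (m + i.+1)) - (y (m + i) + y m.+1 + y c) by ring.
by rewrite e1 e2 subrr.
Qed.

Lemma three_term_arith i : (m + i <= N - m)%N ->
  y (m + i) = y m + i%:R * (y m.+1 - y m).
Proof.
elim: i => [|i IH] i_le; first by rewrite addn0 mul0r addr0.
by rewrite three_term_step // IH; [rewrite mulrSr; ring | lia].
Qed.

Lemma three_term_middle_eq0 : (m + m <= N)%N ->
  forall i, (m + i <= N - m)%N -> y (m + i) = 0.
Proof.
move=> mm_le; set c := (N - m - m)%N; set b := y m.+1 - y m.
have y_Nm : y (N - m) = y m + c%:R * b.
  by rewrite -three_term_arith; [congr y | ]; lia.
have e3 : y m + y m + (y m + c%:R * b) = 0 by rewrite -y_Nm; apply: y_triple; lia.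
have e4 : (y m + b) + (y m + c%:R * b) = 0.
  have -> : y m + b = y m.+1 by rewrite /b addrC subrK.
  by rewrite -y_Nm; apply: three_term_pair; lia.
have b0 : b = 0.
  apply: (@natr_mul_eq0 c.+2).
  have -> : c.+3%:R * b = 3%:R * (y m + b + (y m + c%:R * b)) -
                          2%:R * (y m + y m + (y m + c%:R * b)).
    by rewrite -addn3 natrD; ring.
  by rewrite e3 e4 !mulr0 subr0.
have ym0 : y m = 0.
  apply: (@natr_mul_eq0 2); move: e3; rewrite b0 mulr0 addr0 => <-; ring.
by move=> i i_le; rewrite three_term_arith // -/b b0 ym0 mulr0 addr0.
Qed.

Lemma three_term_eq0 x : (x <= N)%N -> y x = 0.
Proof.
move=> x_le; have [x_lt|m_le_x] := ltnP x m; first exact: y_lt_m.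
have ym0 : y m = 0.
  have [N_lt|mm_le] := ltnP N (m + m); first exact: three_term_m_eq0_short.
  by rewrite -[m]addn0 three_term_middle_eq0 //; lia.
have [x_le_Nm|Nm_lt] := leqP x (N - m).
  by rewrite -(subnKC m_le_x) three_term_middle_eq0 //; lia.
exact: three_term_tail.
Qed.

End ThreeTermEquation.

Definition upper_band (R : pzRingType) (n s : nat) (Z : 'M[R]_n) : Prop :=
  forall i j : 'I_n, (j < i + s)%N -> Z i j = 0.

Section UpperBand.
Variables (R : comPzRingType) (n : nat).
Implicit Types (X Y Z : 'M[R]_n).

Lemma upper_band_add s Y Z :
  upper_band s Y -> upper_band s Z -> upper_band s (Y + Z).
Proof. by move=> Y_s Z_s i j ji; rewrite mxE Y_s ?Z_s ?addr0. Qed.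

Lemma upper_band_scale s a Z : upper_band s Z -> upper_band s (a *: Z).
Proof. by move=> Z_s i j ji; rewrite mxE Z_s ?mulr0. Qed.

Lemma upper_band_mulmx s t X Y :
  upper_band s X -> upper_band t Y -> upper_band (s + t) (X *m Y).
Proof.
move=> X_s Y_t i j ji; rewrite mxE big1 // => l _.
have [l_lt|l_ge] := ltnP l (i + s); first by rewrite X_s ?mul0r.
by rewrite Y_t ?mulr0 //; lia.
Qed.

Lemma upper_band0_mulmx_diag X Y i :
  upper_band 0 X -> upper_band 0 Y -> (X *m Y) i i = X i i * Y i i.
Proof.
move=> X_0 Y_0; rewrite mxE (bigD1 i) //= big1 ?addr0 // => l.
rewrite -val_eqE /= => l_i.
have [l_lt|l_ge] := ltnP l i; first by rewrite X_0 ?mul0r // addn0.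
by rewrite Y_0 ?mulr0 //; lia.
Qed.

Lemma upper_band_commutator s X Y :
  upper_band s X -> upper_band s Y -> upper_band s.+1 (X *m Y - Y *m X).
Proof.
move=> X_s Y_s i j ji.
have -> : (X *m Y - Y *m X) i j = (X *m Y) i j - (Y *m X) i j by rewrite !mxE.
have [j_lt|j_ge] := ltnP j (i + (s + s)).
  by rewrite (upper_band_mulmx X_s Y_s) ?(upper_band_mulmx Y_s X_s) ?subrr.
have s0 : s = 0%N by lia.
have -> : j = i by apply: val_inj => /=; lia.
by subst s; rewrite !upper_band0_mulmx_diag // mulrC subrr.
Qed.

Lemma upper_band_full Z : upper_band n Z -> Z = 0.
Proof. by move=> Z_n; apply/matrixP => i j; rewrite mxE Z_n // ltn_addl. Qed.

End UpperBand.

Lemma derived_upper_band (k : fieldType) (n : nat) (P : 'M[k]_n -> Prop) :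
  (forall L, P L -> upper_triangular L) ->
  forall m Z, derived P m Z -> upper_band m Z.
Proof.
move=> P_ut; elim=> [Z /P_ut Z_ut i j|m IH Z [s [s_der ->]]].
  by rewrite addn0; apply: Z_ut.
elim: s s_der => [|p s IHs] s_der; first by rewrite big_nil => i j; rewrite mxE.
rewrite big_cons; apply: upper_band_add.
  have [X_der Y_der] := s_der p (mem_head _ _).
  by apply: upper_band_scale; apply: upper_band_commutator; apply: IH.
by apply: IHs => q q_s; apply: s_der; rewrite in_cons q_s orbT.
Qed.

Lemma lie_solvable_upper_triangular (k : fieldType) (n : nat)
    (P : 'M[k]_n -> Prop) :
  (forall L, P L -> upper_triangular L) -> lie_solvable P.
Proof.
by move=> P_ut; exists n => Z /(derived_upper_band P_ut)/upper_band_full.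
Qed.

Section ThetaOnBasis.
Variables (k : fieldType) (n d : nat).

Lemma Theta_delta_except (i : 'I_d) (a : 'I_d -> 'I_n) (u : 'I_d -> 'cV[k]_n) :
  (forall j, j != i -> u j = delta_mx (a j) 0) ->
  Theta u =
  \sum_(r < n | (r.+1 + \sum_(j < d | j != i) (a j).+1 == (d - 1) * n + 1)%N)
     u i r 0.
Proof.
move=> u_delta; pose upd r := [ffun j => if j == i then r else a j].
have upd_inj : injective upd by move=> r s /ffunP /(_ i); rewrite !ffunE eqxx.
rewrite /Theta big_mkcond /= (bigID (mem (upd @: setT))) /=.
rewrite [X in _ + X]big1 ?addr0.
- rewrite big_imset /=; last by move=> r s _ _; apply: upd_inj.
  rewrite [RHS]big_mkcond.
  apply: congr_big => // [r|r _]; first by rewrite in_setT.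
  rewrite (bigD1 i) //= ffunE eqxx [X in (_ + X)%N](eq_bigr (fun j => (a j).+1)).
    case: ifP => // _; rewrite (bigD1 i) //= ffunE eqxx big1 ?mulr1 // => j ji.
    by rewrite ffunE (negbTE ji) u_delta // mxE !eqxx.
  by move=> j /negbTE ji; rewrite ffunE ji.
- move=> t t_upd; case: ifP => // _.
  have [j ji tj] : exists2 j, j != i & t j != a j.
    apply/exists_inP; apply: contraNT t_upd => /exists_inPn eq_ta.
    apply/imsetP; exists (t i) => //; apply/ffunP => j; rewrite ffunE.
    by case: eqVneq => [->//|ji]; apply/eqP/negPn/eq_ta.
  by rewrite (bigD1 j) //= u_delta // mxE (negbTE tj) mul0r.
Qed.

Lemma in_Lnd_delta (L : 'M[k]_n) (a : 'I_d -> 'I_n) : in_Lnd d L ->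
  \sum_(i < d)
    \sum_(r < n | (r.+1 + \sum_(j < d | j != i) (a j).+1 == (d - 1) * n + 1)%N)
      L r (a i) = 0.
Proof.
move=> L_Lnd; rewrite -[RHS](L_Lnd (fun j => delta_mx (a j) 0)).
apply: eq_bigr => i _.
rewrite (@Theta_delta_except i a) => [|j /negbTE ->//].
by apply: eq_bigr => r _; rewrite eqxx -colE mxE.
Qed.

End ThetaOnBasis.

Definition subdiag (k : fieldType) (n' : nat) (L : 'M[k]_n'.+1) (m x : nat) : k :=
  if (m <= x)%N then L (inord (n' + m - x)) (inord (n' - x)) else 0.

Section SubdiagonalEquations.
Variables (k : fieldType) (n' : nat) (L : 'M[k]_n'.+1).

Lemma in_Lnd_subdiag (d m : nat) (q : 'I_d -> nat) : in_Lnd d L ->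
  (forall j, q j <= n')%N -> (\sum_j q j = n' + m)%N ->
  \sum_(i < d) subdiag L m (q i) = 0.
Proof.
move=> L_Lnd q_le sum_q; pose a j : 'I_n'.+1 := inord (n' - q j).
have a_val j : a j = (n' - q j)%N :> nat by rewrite inordK // ltnS leq_subr.
rewrite -[RHS](in_Lnd_delta a L_Lnd); apply: eq_bigr => i _.
set S := (\sum_(j < d | j != i) (a j).+1)%N.
(* so the index condition of Theta_delta_except reads r = n' + m - q i *)
have sum_other : (S + (n' + m - q i) = (d - 1) * n'.+1)%N.
  have -> : (n' + m - q i = \sum_(j < d | j != i) q j)%N.
    by rewrite -sum_q (bigD1 i) //= addKn.
  rewrite -big_split /=.
  rewrite (eq_bigr (fun _ => n'.+1)) => [|j _]; last first.
    by rewrite a_val; have := q_le j; lia.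
  by rewrite (eq_bigl (predC1 i)) // sum_nat_const cardC1 card_ord subn1.
rewrite /subdiag; case: leqP => [m_le|q_lt].
  rewrite (eq_bigl (pred1 (inord (n' + m - q i)))) ?big_pred1_eq // => r /=.
  rewrite -val_eqE /= inordK; last by have := q_le i; lia.
  by apply/eqP/eqP; lia.
rewrite big_pred0 // => r; apply/negbTE/eqP; have := ltn_ord r; lia.
Qed.

Lemma in_Lnd_subdiag3 (d m : nat) : in_Lnd d L -> (3 <= d)%N -> (0 < m)%N ->
  forall a b c, (a <= n')%N -> (b <= n')%N -> (c <= n')%N ->
  (a + b + c = m + n')%N ->
  subdiag L m a + subdiag L m b + subdiag L m c = 0.
Proof.
case: d => [|[|[|e]]] // L_Lnd _ m_gt0 a b c a_le b_le c_le sum_abc.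
pose q (j : 'I_e.+3) := nth 0%N [:: a; b; c] j.
have q_tail (j : 'I_e) : q (lift ord0 (lift ord0 (lift ord0 j))) = 0%N.
  by rewrite /q nth_default.
have q_le j : (q j <= n')%N.
  by rewrite /q; case: (nat_of_ord j) => [|[|[|?]]] //=; rewrite nth_nil.
have := in_Lnd_subdiag (m := m) L_Lnd q_le.
rewrite !big_ord_recl !big1 => [|j _|j _];
  [|by rewrite q_tail /subdiag leqNgt m_gt0|by rewrite q_tail].
by rewrite /q /= !addn0 addr0 addrA addnA sum_abc addnC; apply.
Qed.

End SubdiagonalEquations.

Lemma in_Lnd_upper_triangular (k : fieldType) (n d : nat) (L : 'M[k]_n) :
  [pchar k] =i pred0 -> (3 <= d)%N -> in_Lnd d L -> upper_triangular L.
Proof.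
case: n L => [|n'] L k_char0 d_ge3 L_Lnd i j ij; first by case: i ij.
have i_le : (i <= n')%N by rewrite -ltnS.
have j_le : (j <= n')%N by rewrite -ltnS.
have m_gt0 : (0 < j - i)%N by rewrite subn_gt0.
have y_lt_m x : (x < j - i)%N -> subdiag L (j - i) x = 0.
  by move=> x_lt; rewrite /subdiag leqNgt x_lt.
have m_le : (j - i <= n')%N by lia.
have := three_term_eq0 k_char0 m_gt0 m_le y_lt_m
  (in_Lnd_subdiag3 L_Lnd d_ge3 m_gt0) (leq_subr i n').
rewrite /subdiag.
have -> : (n' + (j - i) - (n' - i) = j)%N by lia.
by rewrite subKn // !inord_val ifT //; lia.
Qed.

Theorem proposition3p5 (k : closedFieldType) (n d : nat)
  (hchar : [pchar k] =i pred0) (hd : (3 <= d)%N) (hn : (1 <= n)%N) :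
  (forall L : 'M[k]_n, in_Lnd d L -> upper_triangular L) /\
  lie_solvable (@in_Lnd k n d).
Proof.
split=> [L|]; first exact: in_Lnd_upper_triangular.
by apply: lie_solvable_upper_triangular => L; apply: in_Lnd_upper_triangular.
Qed.
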